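(* The interaction-free subspace satisfies $W=\operatorname{ran}|Z|_1^\perp$, where $|Z|_1^\perp=P_1-Z_1^*Z_1$.
   Context: Fix integers $N\ge 2$ and $n_1\ge n_2\ge\dots\ge n_N\ge 1$. Let $\mathcal H$ be a finite-dimensional complex Hilbert space with orthonormal basis $\{|-\rangle,|+\rangle\}\cup\{|a_k\rangle:1\le k\le N,\ 0\le a\le n_k-1\}$. For vectors $x,y$, $|x\rangle\langle y|$ denotes the operator $u\mapsto\langle y,u\rangle x$. Put $E_k=\mathrm{span}\{|a_k\rangle:0\le a\le n_k-1\}$, $P_k$ the orthogonal projection onto $E_k$, $\zeta_k=e^{2\pi i/n_k}$, and $\varphi_{a_k}=n_k^{-1/2}\sum_{b=0}^{n_k-1}\zeta_k^{-ba}|b_k\rangle$. For $1\le k\le N-1$ let $Z_k=n_k^{-1/2}\sum_{b=0}^{n_{k+1}-1}\sum_{a=0}^{n_k-1}\zeta_k^{ba}|b_{k+1}\rangle\langle a_k|$ (an operator on $\mathcal H$). Let $\omega$ range over $\{\omega_+,\omega_-,\omega_1,\dots,\omega_{N-1}\}$ and let $\Gamma_{\pm,\omega}>0$ be constants. Kraus operators: $L_{-,\omega_+}=\sqrt{n_1\Gamma_{-,\omega_+}}|\varphi_{0_1}\rangle\langle +|$, $L_{+,\omega_+}=\sqrt{n_1\Gamma_{+,\omega_+}}|+\rangle\langle\varphi_{0_1}|$, $L_{-,\omega_k}=\sqrt{\Gamma_{-,\omega_k}}Z_k$, $L_{+,\omega_k}=\sqrt{\Gamma_{+,\omega_k}}Z_k^*$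 ($1\le k\le N-1$), $L_{-,\omega_-}=\sqrt{\Gamma_{-,\omega_-}}|-\rangle\langle\varphi_{0_N}|$, $L_{+,\omega_-}=0$. The interaction-free subspace is $W=\bigcap_{\omega}\bigcap_{\epsilon=\pm}(\ker L_{\epsilon,\omega}\cap\ker L_{\epsilon,\omega}^* )$. *)

From HB Require Import structures.
From mathcomp Require Import all_boot all_order all_algebra all_field.
Set Implicit Arguments. Unset Strict Implicit. Unset Printing Implicit Defensive.
Import Order.TTheory GRing.Theory Num.Theory.
Local Open Scope ring_scope.

(* Orthonormal basis of H: inl false = |->, inl true = |+>,
   inr (existT k a) = |a_(k+1)> with k : 'I_N (0-based) and a : 'I_(n (k+1)).
   The parameters n_k are given 1-based as n : nat -> nat. *)
Definition basis (N : nat) (n : nat -> nat) : finType :=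
  (bool + {k : 'I_N & 'I_(n k.+1)})%type.

Section Ops.
Variables (N : nat) (n : nat -> nat).
Local Notation B := (basis N n).

Definition vec := B -> algC.
Definition op := B -> B -> algC.

Definition opapply (A : op) (v : vec) : vec := fun x => \sum_(y : B) A x y * v y.
Definition opcomp (A C : op) : op := fun x z => \sum_(y : B) A x y * C y z.
Definition opadj (A : op) : op := fun x y => (A y x)^*.
Definition opsub (A C : op) : op := fun x y => A x y - C x y.
Definition opscale (c : algC) (A : op) : op := fun x y => c * A x y.
Definition op0 : op := fun _ _ => 0.
(* |x><y| : u |-> <y,u> x, with inner product antilinear in the first slot *)
Definition ketbra (x y : vec) : op := fun i j => x i * (y j)^*.
Definition vscale (c : algC) (v : vec) : vec := fun x => c * v x.
Definition vsum (I : seq nat) (f : nat -> vec) : vec :=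
  fun x => \sum_(i <- I) f i x.
Definition opsum (I : seq nat) (f : nat -> op) : op :=
  fun x y => \sum_(i <- I) f i x y.

Definition e_pm (s : bool) : vec := fun x => (x == inl s)%:R.
(* |a_k> (1-based k, meaningful for 1 <= k <= N, a < n_k) *)
Definition e_a (k a : nat) : vec := fun x =>
  match x with
  | inl _ => 0
  | inr s => (((tag s).+1 == k) && (val (tagged s) == a))%:R
  end.

(* zeta_n = e^{2 pi i / n}: n.-root (-1) is the n-th root of -1 of minimal
   nonnegative argument, i.e. e^{i pi / n}; its square is e^{2 pi i / n}. *)
Definition zeta (m : nat) : algC := (m.-root (-1)) ^+ 2.
Definition isqrt (m : nat) : algC := (sqrtC (m%:R))^-1.

Definition Pk (k : nat) : op := opsum (iota 0 (n k)) (fun a => ketbra (e_a k a) (e_a k a)).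

Definition phi (k a : nat) : vec :=
  vscale (isqrt (n k)) (vsum (iota 0 (n k)) (fun b => vscale (zeta (n k) ^- (b * a)) (e_a k b))).

Definition Zop (k : nat) : op :=
  opscale (isqrt (n k))
   (opsum (iota 0 (n k.+1)) (fun b =>
     opsum (iota 0 (n k)) (fun a =>
       opscale (zeta (n k) ^+ (b * a)) (ketbra (e_a k.+1 b) (e_a k a))))).

Inductive omega := om_plus | om_minus | om_k of nat.
Definition omega_valid (w : omega) : bool :=
  match w with om_k k => (1 <= k < N)%N | _ => true end.

(* Kraus operators L_{eps,omega}; eps : bool with true = '+', false = '-'.
   Gp e = Gamma_{e,omega_+}, Gm e = Gamma_{e,omega_-}, Gk e k = Gamma_{e,omega_k}. *)
Definition Kraus (Gp Gm : bool -> algC) (Gk : bool -> nat -> algC)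
  (e : bool) (w : omega) : op :=
  match w, e with
  | om_plus, false => opscale (sqrtC ((n 1)%:R * Gp false)) (ketbra (phi 1 0) (e_pm true))
  | om_plus, true => opscale (sqrtC ((n 1)%:R * Gp true)) (ketbra (e_pm true) (phi 1 0))
  | om_k k, false => opscale (sqrtC (Gk false k)) (Zop k)
  | om_k k, true => opscale (sqrtC (Gk true k)) (opadj (Zop k))
  | om_minus, false => opscale (sqrtC (Gm false)) (ketbra (e_pm false) (phi N 0))
  | om_minus, true => op0
  end.

Definition in_W (Gp Gm : bool -> algC) (Gk : bool -> nat -> algC) (v : vec) : Prop :=
  forall (e : bool) (w : omega), omega_valid w ->
    (forall x, opapply (Kraus Gp Gm Gk e w) v x = 0) /\
    (forall x, opapply (opadj (Kraus Gp Gm Gk e w)) v x = 0).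

Definition in_range (A : op) (v : vec) : Prop :=
  exists u : vec, forall x, v x = opapply A u x.

End Ops.

(* Both sides are the set of vectors supported on E_1 and annihilated by Z_1.
   A vector of W has no |+> component (L_{-,omega_+}) and no |-> component
   (L_{-,omega_-}^* ), and Z_1 v = 0 (L_{-,omega_1}).  Since n_{k+1} <= n_k, the
   rows of Z_k are orthonormal by discrete Fourier orthogonality, so
   Z_k^* v = 0 forces v to vanish on E_{k+1}.  Conversely every Kraus operator
   and its adjoint kill such a v, phi_{0_1} being proportional to the first row
   of Z_1.  The same orthogonality gives Z_1 Z_1^* Z_1 = Z_1, so P_1 - Z_1^* Z_1
   maps into the intersection of E_1 and ker Z_1 and is the identity there.
   Fourier orthogonality needs zeta_n to be a primitive n-th root of unity.
   Since n.-root (-1) is the n-th root of -1 of largest real part in the closed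
   upper half plane, this follows from: a root of unity other than 1 of largest
   real part among the M-th roots of unity is a primitive M-th root. *)

From mathcomp Require Import all_boot all_order all_algebra all_field.
From mathcomp Require Import lra.
Import Order.TTheory GRing.Theory Num.Theory.
Set Implicit Arguments. Unset Strict Implicit. Unset Printing Implicit Defensive.
Local Open Scope ring_scope.

Lemma sum_iota_delta (R : pzSemiRingType) m j (F : nat -> R) :
  \sum_(b <- iota 0 m) (j == b)%:R * F b = (j < m)%N%:R * F j.
Proof.
have -> : iota 0 m = index_iota 0 m by rewrite /index_iota subn0.
rewrite (eq_bigr (fun b => if b == j then F b else 0)) => [|b _]; last first.
  by rewrite eq_sym; case: eqP; rewrite ?mul1r ?mul0r.
by rewrite -big_mkcond big_nat1_eq /=; case: ltnP; rewrite ?mul1r ?mul0r.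
Qed.

Lemma eq0_of_mulf_eq0 (F : idomainType) (c x : F) : c != 0 -> c * x = 0 -> x = 0.
Proof. by move=> /negbTE c_neq0 /eqP; rewrite mulf_eq0 c_neq0 => /eqP. Qed.

Lemma eq_big_iota (R : nmodType) m (F G : nat -> R) :
  (forall b, (b < m)%N -> F b = G b) ->
  \sum_(b <- iota 0 m) F b = \sum_(b <- iota 0 m) G b.
Proof.
by move=> FG; rewrite !big_seq; apply: eq_bigr => b; rewrite mem_iota => /andP[_ /FG].
Qed.

Lemma isqrt_conj m : (isqrt m)^* = isqrt m.
Proof. by apply: geC0_conj; rewrite invr_ge0 sqrtC_ge0 ler0n. Qed.

Lemma isqrt_neq0 m : (0 < m)%N -> isqrt m != 0.
Proof. by move=> m_gt0; rewrite invr_eq0 sqrtC_eq0 pnatr_eq0 -lt0n. Qed.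

Lemma isqrt_sqrK m : (0 < m)%N -> isqrt m ^+ 2 * m%:R = 1.
Proof. by move=> m_gt0; rewrite exprVn sqrtCK mulVf // pnatr_eq0 -lt0n. Qed.

Lemma norm_unity_root M (y : algC) : (0 < M)%N -> y ^+ M = 1 -> `|y| = 1.
Proof.
by move=> M_gt0 yM; apply/eqP; rewrite -(pexpr_eq1 M_gt0) ?normr_ge0 // -normrX yM normr1.
Qed.

Lemma Re_lt1_of_norm1 (g : algC) : `|g| = 1 -> g != 1 -> 'Re g < 1.
Proof.
move=> ng g_neq1; rewrite -ng (lt_leif (leif_Re_Creal g)).
by apply: contra g_neq1 => g_ge0; rewrite -(ger0_norm g_ge0) ng.
Qed.

Lemma unit_circle_rotation_contra (R : realDomainType) (t1 t2 g1 g2 : R) :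
  t1 ^+ 2 + t2 ^+ 2 = 1 -> g1 ^+ 2 + g2 ^+ 2 = 1 -> t1 <= g1 -> g1 < 1 ->
  t1 * g1 - t2 * g2 <= t1 -> t1 * g1 + t2 * g2 <= t1 -> False.
Proof. by move=> *; nra. Qed.

Lemma Re_unit_rotation_contra (t g : algC) : `|t| = 1 -> `|g| = 1 ->
  'Re t <= 'Re g -> 'Re g < 1 ->
  'Re (t * g) <= 'Re t -> 'Re (t * g^*) <= 'Re t -> False.
Proof.
move=> nt ng le_tg lt_g1 le_tg_t le_tgc_t.
pose r x := in_algR (Creal_Re x); pose i x := in_algR (Creal_Im x).
have unit x : `|x| = 1 -> r x ^+ 2 + i x ^+ 2 = 1.
  by move=> nx; apply: val_inj; rewrite /= -normC2_Re_Im nx expr1n.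
apply: (unit_circle_rotation_contra (unit t nt) (unit g ng) le_tg lt_g1).
- by move: le_tg_t; rewrite ReM.
- by move: le_tgc_t; rewrite ReM Re_conj Im_conj mulrN opprK.
Qed.

Lemma exists_Re_max (I : finType) (P : pred I) (F : I -> algC) i0 :
  P i0 -> exists2 j, P j & forall i, P i -> 'Re (F i) <= 'Re (F j).
Proof.
move=> Pi0.
have [j Pj maxj] := @arg_maxP _ _ I i0 P (fun i => in_algR (Creal_Re (F i))) Pi0.
by exists j => // i /maxj.
Qed.

(* If g had order d < M, the point t of largest real part on a coset z<g> not
   containing 1 would satisfy Re (t g), Re (t g^* ) <= Re t <= Re g < 1. *)
Lemma Re_max_unity_root_prim M (g : algC) : (0 < M)%N -> g ^+ M = 1 -> g != 1 ->
  (forall y, y ^+ M = 1 -> y != 1 -> 'Re y <= 'Re g) -> M.-primitive_root g.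
Proof.
move=> M_gt0 gM g_neq1 g_max.
have [d prim_g dvd_dM] := prim_order_exists M_gt0 gM.
have d_gt0 := prim_order_gt0 prim_g.
suff /eqP <- : d == M by [].
rewrite eqn_leq (dvdn_leq M_gt0 dvd_dM) leqNgt; apply/negP => lt_dM.
have [z prim_z] := C_prim_root_exists M_gt0.
have [j0 _ j0_max] := @exists_Re_max _ predT (fun j : 'I_d => z * g ^+ j) (Ordinal d_gt0) isT.
set t := z * g ^+ j0 in j0_max.
have tM : t ^+ M = 1.
  by rewrite exprMn (prim_expr_order prim_z) -exprM mulnC exprM gM expr1n mul1r.
have t_neq1 : t != 1.
  apply: contraTneq lt_dM => t1; rewrite -leqNgt dvdn_leq // (prim_order_dvd prim_z).
  have : t ^+ d = 1 by rewrite t1 expr1n.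
  by rewrite exprMn -exprM mulnC exprM (prim_expr_order prim_g) expr1n mulr1 => ->.
have Re_orbit k : 'Re (t * g ^+ k) <= 'Re t.
  rewrite -mulrA -exprD -(prim_expr_mod prim_g).
  exact: (j0_max (Ordinal (ltn_pmod _ d_gt0))).
have norm_g := norm_unity_root M_gt0 gM.
have gc : g^* = g ^+ d.-1.
  apply: (mulIf (x := g)); first by rewrite -normr_eq0 norm_g oner_eq0.
  by rewrite -normCKC norm_g expr1n -exprSr prednK // (prim_expr_order prim_g).
apply: (Re_unit_rotation_contra (norm_unity_root M_gt0 tM) norm_g
  (g_max _ tM t_neq1) (Re_lt1_of_norm1 norm_g g_neq1) (Re_orbit 1%N)).
by rewrite gc Re_orbit.
Qed.

Lemma rootCN1_prim m : (0 < m)%N -> (m.*2).-primitive_root (m.-root (-1 : algC)).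
Proof.
move=> m_gt0; set w := m.-root (-1); set M := m.*2.
have M_gt1 : (1 < M)%N by rewrite /M -addnn (leq_add m_gt0 m_gt0).
have M_gt0 := ltnW M_gt1.
have wm : w ^+ m = -1 := rootCK m_gt0 (-1).
have wM : w ^+ M = 1 by rewrite /M -muln2 exprM wm sqrrN expr1n.
have w_neq1 : w != 1.
  by apply: contra_eq_neq wm => ->; rewrite expr1n gt_eqF // (lt_trans (ltrN10 _) ltr01).
have [z prim_z] := C_prim_root_exists M_gt0.
have [k k_neq0 k_max] :=
  @exists_Re_max _ (fun k : 'I_M => val k != 0%N) (fun k => z ^+ k) (Ordinal M_gt1) isT.
set g := z ^+ k in k_max.
have g_max y : y ^+ M = 1 -> y != 1 -> 'Re y <= 'Re g.
  move=> yM y_neq1; have [i Dy] := prim_rootP prim_z yM; rewrite Dy in y_neq1 *.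
  by apply: k_max; apply: contraNneq y_neq1 => ->.
have g_neq1 : g != 1.
  rewrite -(prim_order_dvd prim_z); apply: contra k_neq0 => dvd_Mk.
  by apply: contraTT (ltn_ord k) => k_gt0; rewrite -leqNgt dvdn_leq // lt0n.
have gM : g ^+ M = 1 by rewrite -exprM mulnC exprM (prim_expr_order prim_z) expr1n.
have prim_g := Re_max_unity_root_prim M_gt0 gM g_neq1 g_max.
(* rootC only compares roots with nonnegative imaginary part. *)
pose g' := if 0 <= 'Im g then g else g^*.
have prim_g' : M.-primitive_root g'.
  by rewrite /g'; case: ifP => // _; rewrite fmorph_primitive_root.
have g'm : g' ^+ m = -1.
  have : (g' ^+ m) ^+ 2 == 1 by rewrite -exprM muln2 -/M (prim_expr_order prim_g').
  rewrite sqrf_eq1 -(prim_order_dvd prim_g') => /orP[|/eqP //].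
  by move/(dvdn_leq m_gt0); rewrite leqNgt /M -addnn -addn1 leq_add2l m_gt0.
have Im_g' : 0 <= 'Im g'.
  rewrite /g'; case: ifP => // /negbT; rewrite Im_conj oppr_ge0.
  by move=> Im_lt0; rewrite ltW // real_ltNge ?Creal_Im ?real0.
have Re_g' : 'Re g' = 'Re g by rewrite /g'; case: ifP; rewrite ?Re_conj.
apply: Re_max_unity_root_prim M_gt0 wM w_neq1 _ => y yM y_neq1.
by rewrite (le_trans (g_max y yM y_neq1)) // -Re_g' (rootC_Re_max m_gt0 g'm Im_g').
Qed.

Lemma zeta_prim m : (0 < m)%N -> m.-primitive_root (zeta m).
Proof.
have dvd_m2m : (m %| m.*2)%N by rewrite -muln2 dvdn_mulr.
move=> m_gt0; have := dvdn_prim_root (rootCN1_prim m_gt0) dvd_m2m.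
by rewrite -muln2 mulKn.
Qed.

Lemma zeta_orth m a b : (a < m)%N -> (b < m)%N ->
  \sum_(c <- iota 0 m) zeta m ^+ (a * c) * (zeta m ^+ (b * c))^* = (a == b)%:R * m%:R.
Proof.
move=> lt_am lt_bm; have m_gt0 : (0 < m)%N by apply: leq_ltn_trans lt_am.
have prim_z := zeta_prim m_gt0; set z := zeta m in prim_z *.
have norm_z i : `|z ^+ i| = 1.
  apply: (norm_unity_root m_gt0).
  by rewrite -exprM mulnC exprM (prim_expr_order prim_z) expr1n.
set x := z ^+ a * (z ^+ b)^*.
have xE c : z ^+ (a * c) * (z ^+ (b * c))^* = x ^+ c by rewrite !exprM rmorphXn -exprMn.
under eq_bigr do rewrite xE.
have -> : iota 0 m = index_iota 0 m by rewrite /index_iota subn0.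
rewrite big_mkord; have [eq_ab|neq_ab] := eqVneq a b.
  subst b; have -> : x = 1 by rewrite /x -normCK norm_z expr1n.
  by rewrite (eq_bigr (fun=> 1)) => [|c _]; rewrite ?expr1n // sumr_const card_ord mul1r.
have x_neq1 : x != 1.
  apply: contra neq_ab => /eqP x1.
  have : z ^+ a == z ^+ b.
    by rewrite -[z ^+ a]mulr1 -(expr1n _ 2) -(norm_z b) normCK mulrCA -/x x1 mulr1.
  by rewrite (eq_prim_root_expr prim_z) !modn_small.
have xm : x ^+ m = 1.
  rewrite exprMn -rmorphXn -!exprM !(mulnC _ m) !exprM (prim_expr_order prim_z) !expr1n.
  by rewrite mul1r; apply: rmorph1.
have /eqP := subrX1 x m; rewrite xm subrr eq_sym mulf_eq0 subr_eq0 (negbTE x_neq1) /=.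
by move/eqP ->; rewrite mul0r.
Qed.

Lemma zeta_inversion m m' a (f : nat -> algC) : (m' <= m)%N -> (a < m')%N ->
  \sum_(c <- iota 0 m) zeta m ^+ (a * c) *
    \sum_(b <- iota 0 m') (zeta m ^+ (b * c))^* * f b = m%:R * f a.
Proof.
move=> le_m'm lt_am'; under eq_bigr do rewrite mulr_sumr.
rewrite exchange_big /=.
transitivity (\sum_(b <- iota 0 m') (a == b)%:R * (m%:R * f b)); last first.
  by rewrite sum_iota_delta lt_am' mul1r.
apply: eq_big_iota => b lt_bm'.
rewrite mulrA -(zeta_orth (leq_trans lt_am' le_m'm) (leq_trans lt_bm' le_m'm)).
by rewrite mulr_suml; apply: eq_bigr => c _; rewrite mulrA.
Qed.

Section Operators.
Variables (N : nat) (n : nat -> nat).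
Implicit Types (A C : op N n) (p q w : vec N n) (x y : basis N n).

Definition inner p q : algC := \sum_y (p y)^* * q y.

Lemma opapply_scale c A w x : opapply (opscale c A) w x = c * opapply A w x.
Proof. by rewrite /opapply mulr_sumr; apply: eq_bigr => y _; rewrite mulrA. Qed.

Lemma opapply_adj_scale c A w x :
  opapply (opadj (opscale c A)) w x = c^* * opapply (opadj A) w x.
Proof.
by rewrite /opapply mulr_sumr; apply: eq_bigr => y _; rewrite /opadj rmorphM mulrA.
Qed.

Lemma opapply_adjK A w x : opapply (opadj (opadj A)) w x = opapply A w x.
Proof. rewrite /opapply; apply: eq_bigr => y _; by rewrite /opadj conjCK. Qed.

Lemma opapply_ketbra p q w x : opapply (ketbra p q) w x = p x * inner q w.
Proof. by rewrite /opapply mulr_sumr; apply: eq_bigr => y _; rewrite mulrA. Qed.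

Lemma opapply_adj_ketbra p q w x : opapply (opadj (ketbra p q)) w x = q x * inner p w.
Proof.
rewrite /opapply mulr_sumr; apply: eq_bigr => y _.
by rewrite /opadj /ketbra rmorphM /= conjCK mulrA (mulrC (p y)^*).
Qed.

Lemma opapply_sum (I : seq nat) (F : nat -> op N n) w x :
  opapply (opsum I F) w x = \sum_(i <- I) opapply (F i) w x.
Proof.
rewrite /opapply /opsum exchange_big /=.
by apply: eq_bigr => y _; rewrite mulr_suml.
Qed.

Lemma opapply_adj_sum (I : seq nat) (F : nat -> op N n) w x :
  opapply (opadj (opsum I F)) w x = \sum_(i <- I) opapply (opadj (F i)) w x.
Proof.
rewrite /opapply /opadj /opsum exchange_big /=.
by apply: eq_bigr => y _; rewrite rmorph_sum mulr_suml.
Qed.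

Lemma opapply_sub A C w x : opapply (opsub A C) w x = opapply A w x - opapply C w x.
Proof. by rewrite /opapply -sumrB; apply: eq_bigr => y _; rewrite mulrBl. Qed.

Lemma opapply_comp A C w x : opapply (opcomp A C) w x = opapply A (opapply C w) x.
Proof.
rewrite /opapply /opcomp; under eq_bigr do rewrite mulr_suml.
rewrite exchange_big /=; apply: eq_bigr => y _.
by rewrite mulr_sumr; apply: eq_bigr => z _; rewrite mulrA.
Qed.

Lemma opapply_eq0 A w x : (forall y, A x y = 0) -> opapply A w x = 0.
Proof. by move=> A0; rewrite /opapply big1 // => y _; rewrite A0 mul0r. Qed.

Lemma opapply_vec0 A w x : (forall y, w y = 0) -> opapply A w x = 0.
Proof. by move=> w0; rewrite /opapply big1 // => y _; rewrite w0 mulr0. Qed.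

Lemma inner_delta p x0 w : (forall y, p y = (y == x0)%:R) -> inner p w = w x0.
Proof.
move=> pE; rewrite /inner (bigD1 x0) //= pE eqxx conjC1 mul1r big1 ?addr0 // => y.
by move=> /negbTE y_neq; rewrite pE y_neq conjC0 mul0r.
Qed.

Lemma inner_e_pm s w : inner (e_pm s) w = w (inl s).
Proof. exact: inner_delta. Qed.

(* The basis vector |a_k>; the junk value |+> when k or a is out of range. *)
Definition pt k a : basis N n := odflt (inl true) [pick x | e_a k a x == 1].

Lemma e_a_inr k a (s : {i : 'I_N & 'I_(n i.+1)}) :
  e_a k a (inr s) = (((tag s).+1 == k) && (val (tagged s) == a))%:R.
Proof. by []. Qed.

Lemma basis_inr_inj (s1 s2 : {i : 'I_N & 'I_(n i.+1)}) :
  tag s1 = tag s2 :> nat -> val (tagged s1) = val (tagged s2) -> s1 = s2.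
Proof.
case: s1 s2 => [k1 a1] [k2 a2] /= /val_inj ek; subst k2 => /val_inj -> //.
Qed.

Lemma pt_spec k a : (1 <= k <= N)%N -> (a < n k)%N ->
  exists s, [/\ pt k a = inr s, (tag s).+1 = k & val (tagged s) = a].
Proof.
case: k => // k /= kN ha.
rewrite /pt; case: pickP => [x /eqP|none] /=.
  case: x => [s|s]; first by move=> /esym/eqP; rewrite oner_eq0.
  rewrite e_a_inr; case: andP => [[/eqP k_s /eqP a_s] _|_ /esym/eqP].
    by exists s.
  by rewrite oner_eq0.
pose a_k : 'I_(n (Ordinal kN).+1) := Ordinal ha.
by have := none (inr (Tagged (fun i : 'I_N => 'I_(n i.+1)) a_k)); rewrite e_a_inr /= !eqxx.
Qed.

Lemma e_a_pt k a k' a' : (1 <= k <= N)%N -> (a < n k)%N ->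
  e_a k' a' (pt k a) = ((k == k') && (a == a'))%:R.
Proof. by move=> hk ha; have [s [-> <- <-]] := pt_spec hk ha. Qed.

Lemma e_aE k a y : (1 <= k <= N)%N -> (a < n k)%N -> e_a k a y = (y == pt k a)%:R.
Proof.
move=> hk ha; have [s [-> <- <-]] := pt_spec hk ha.
case: y => [//|s']; rewrite e_a_inr; congr (nat_of_bool _)%:R.
apply/andP/eqP => [[/eqP/succn_inj ek /eqP ea]|[->]]; last by rewrite !eqxx.
by rewrite (basis_inr_inj ek ea).
Qed.

Lemma inner_e_a k a w : (1 <= k <= N)%N -> (a < n k)%N -> inner (e_a k a) w = w (pt k a).
Proof. by move=> hk ha; apply: inner_delta => y; apply: e_aE. Qed.

Lemma basis_cases x : (exists s, x = inl s) \/
  exists k a, [/\ (1 <= k <= N)%N, (a < n k)%N & x = pt k a].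
Proof.
case: x => [s|s]; [by left; exists s | right; exists (tag s).+1, (val (tagged s))].
have hk : (1 <= (tag s).+1 <= N)%N by rewrite /= ltn_ord.
have ha := ltn_ord (tagged s); split=> //.
by have [s' [-> /succn_inj ek ea]] := pt_spec hk ha; rewrite (basis_inr_inj ek ea).
Qed.

Lemma sum_e_a_pt m k k' a' (F : nat -> algC) : (1 <= k' <= N)%N -> (a' < n k')%N ->
  \sum_(a <- iota 0 m) e_a k a (pt k' a') * F a = ((k' == k) && (a' < m)%N)%:R * F a'.
Proof.
move=> hk' ha'; under eq_bigr do rewrite e_a_pt // -mulnb natrM -mulrA.
by rewrite -mulr_sumr sum_iota_delta mulrA -natrM mulnb.
Qed.

Lemma Pk_apply k w x : (1 <= k <= N)%N ->
  opapply (Pk k) w x = \sum_(a <- iota 0 (n k)) e_a k a x * w (pt k a).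
Proof.
move=> hk; rewrite opapply_sum.
by apply: eq_big_iota => a ha; rewrite opapply_ketbra inner_e_a.
Qed.

Definition dft k w b := \sum_(a <- iota 0 (n k)) zeta (n k) ^+ (b * a) * w (pt k a).

Definition idft k w a :=
  \sum_(b <- iota 0 (n k.+1)) (zeta (n k) ^+ (b * a))^* * w (pt k.+1 b).

Lemma Zop_apply k w x : (1 <= k <= N)%N ->
  opapply (Zop k) w x = isqrt (n k) * \sum_(b <- iota 0 (n k.+1)) e_a k.+1 b x * dft k w b.
Proof.
move=> hk; rewrite opapply_scale opapply_sum; congr (_ * _); apply: eq_bigr => b _.
rewrite opapply_sum mulr_sumr; apply: eq_big_iota => a ha.
by rewrite opapply_scale opapply_ketbra inner_e_a // mulrCA.
Qed.

Lemma Zadj_apply k w x : (k < N)%N ->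
  opapply (opadj (Zop k)) w x = isqrt (n k) * \sum_(a <- iota 0 (n k)) e_a k a x * idft k w a.
Proof.
move=> kN; rewrite opapply_adj_scale isqrt_conj opapply_adj_sum; congr (_ * _).
under eq_bigr do rewrite opapply_adj_sum.
rewrite exchange_big /=; apply: eq_bigr => a _; rewrite mulr_sumr.
apply: eq_big_iota => b hb.
by rewrite opapply_adj_scale opapply_adj_ketbra inner_e_a ?kN // mulrCA.
Qed.

Lemma Zop_apply_pt k b w : (1 <= k < N)%N -> (b < n k.+1)%N ->
  opapply (Zop k) w (pt k.+1 b) = isqrt (n k) * dft k w b.
Proof.
move=> /andP[k_gt0 kN] hb; have hk : (1 <= k <= N)%N by rewrite k_gt0 ltnW.
by rewrite Zop_apply // sum_e_a_pt // eqxx hb mul1r.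
Qed.

Lemma Zadj_apply_pt k a w : (1 <= k < N)%N -> (a < n k)%N ->
  opapply (opadj (Zop k)) w (pt k a) = isqrt (n k) * idft k w a.
Proof.
move=> /andP[k_gt0 kN] ha; have hk : (1 <= k <= N)%N by rewrite k_gt0 ltnW.
by rewrite Zadj_apply // sum_e_a_pt // eqxx ha mul1r.
Qed.

Lemma phi0E k y : phi k 0 y = isqrt (n k) * \sum_(b <- iota 0 (n k)) e_a k b y.
Proof.
rewrite /phi /vscale /vsum; congr (_ * _); apply: eq_bigr => b _.
by rewrite muln0 expr0 invr1 mul1r.
Qed.

Lemma phi0_pt k : (1 <= k <= N)%N -> (0 < n k)%N -> phi k 0 (pt k 0) = isqrt (n k).
Proof.
move=> hk nk_gt0; rewrite phi0E (eq_bigr (fun b => e_a k b (pt k 0) * 1)) => [|b _].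
  by rewrite sum_e_a_pt // eqxx nk_gt0 !mulr1.
by rewrite mulr1.
Qed.

Lemma inner_phi0 k w : (1 <= k <= N)%N ->
  inner (phi k 0) w = isqrt (n k) * \sum_(a <- iota 0 (n k)) w (pt k a).
Proof.
move=> hk; rewrite /inner.
under eq_bigr do rewrite phi0E rmorphM /= isqrt_conj rmorph_sum -mulrA mulr_suml.
rewrite -mulr_sumr exchange_big /=; congr (_ * _).
by apply: eq_big_iota => a ha; rewrite -(inner_e_a w hk ha).
Qed.

End Operators.

Arguments pt {N n} k a.

Section InteractionFree.
Variables (N : nat) (n : nat -> nat) (Gp Gm : bool -> algC) (Gk : bool -> nat -> algC).
Hypothesis N_ge2 : (2 <= N)%N.
Hypothesis n_mono : forall k, (1 <= k < N)%N -> (n k.+1 <= n k)%N.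
Hypothesis nN_gt0 : (1 <= n N)%N.
Hypothesis Gp_gt0 : forall e, 0 < Gp e.
Hypothesis Gm_gt0 : forall e, 0 < Gm e.
Hypothesis Gk_gt0 : forall e k, (1 <= k < N)%N -> 0 < Gk e k.
Implicit Types (v : vec N n) (x : basis N n).

Lemma n_gt0 k : (1 <= k <= N)%N -> (0 < n k)%N.
Proof.
move=> /andP[k_gt0 kN]; apply: leq_trans nN_gt0 _.
suff n_anti j : (k + j <= N)%N -> (n (k + j) <= n k)%N by rewrite -(subnKC kN) n_anti ?subnKC.
elim: j => [|j IHj] hj; first by rewrite addn0.
rewrite addnS in hj *; apply: leq_trans (IHj (ltnW hj)).
by rewrite n_mono // hj andbT (leq_trans k_gt0) ?leq_addr.
Qed.

(* The last clause is Z_1 v = 0, by [Zop_apply]. *)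
Definition in_E1_kerZ1 v : Prop :=
  [/\ v (inl true) = 0, v (inl false) = 0,
      (forall k a, (1 <= k < N)%N -> (a < n k.+1)%N -> v (pt k.+1 a) = 0) &
      forall b, (b < n 2)%N -> dft 1 v b = 0].

Lemma dft_E1_kerZ1 v k b : in_E1_kerZ1 v -> (1 <= k < N)%N -> (b < n k.+1)%N ->
  dft k v b = 0.
Proof.
move=> [_ _ vE dft0]; case: k => [//|[|k] hk hb]; first exact: dft0.
apply: big1_seq => a /andP[_]; rewrite mem_iota => /andP[_ ha].
by rewrite vE ?mulr0 //; case/andP: hk => _ /ltnW ->.
Qed.

Lemma idft_E1_kerZ1 v k a : in_E1_kerZ1 v -> (1 <= k < N)%N -> idft k v a = 0.
Proof.
move=> [_ _ vE _] hk; apply: big1_seq => b /andP[_]; rewrite mem_iota => /andP[_ hb].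
by rewrite vE ?mulr0.
Qed.

Lemma Zop_E1_kerZ1 v k x : in_E1_kerZ1 v -> (1 <= k < N)%N -> opapply (Zop k) v x = 0.
Proof.
move=> hv hk; have /andP[k_gt0 kN] := hk; rewrite Zop_apply ?k_gt0 ?(ltnW kN) //.
rewrite big1_seq ?mulr0 // => b /andP[_]; rewrite mem_iota => /andP[_ hb].
by rewrite dft_E1_kerZ1 ?mulr0.
Qed.

Lemma Zadj_E1_kerZ1 v k x : in_E1_kerZ1 v -> (1 <= k < N)%N ->
  opapply (opadj (Zop k)) v x = 0.
Proof.
move=> hv hk; have /andP[_ kN] := hk; rewrite Zadj_apply //.
by rewrite big1 ?mulr0 // => a _; rewrite idft_E1_kerZ1 ?mulr0.
Qed.

Lemma in_W_of_E1_kerZ1 v : in_E1_kerZ1 v -> in_W Gp Gm Gk v.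
Proof.
move=> hv; have [v_p v_m vE dft0] := hv.
have h1N : (1 <= 1 <= N)%N := ltnW N_ge2.
have h2N : (1 <= 2 <= N)%N := N_ge2.
have inner_phi1 : inner (phi 1 0) v = 0.
  have := dft0 0%N (n_gt0 h2N); rewrite /dft; under eq_bigr do rewrite mul0n expr0 mul1r.
  by rewrite inner_phi0 // => ->; rewrite mulr0.
have inner_phiN : inner (phi N 0) v = 0.
  have hN1 : (1 <= N.-1 < N)%N by rewrite ltn_predRL N_ge2 ltn_predL ltnW.
  rewrite inner_phi0 ?leqnn ?(ltnW N_ge2) // big1_seq ?mulr0 // => a /andP[_].
  rewrite mem_iota => /andP[_ ha].
  by have := vE _ a hN1; rewrite (prednK (ltnW N_ge2)); apply.
move=> e [||k] /= hk; case: e; split=> x.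
- by rewrite opapply_scale opapply_ketbra inner_phi1 !mulr0.
- by rewrite opapply_adj_scale opapply_adj_ketbra inner_e_pm v_p !mulr0.
- by rewrite opapply_scale opapply_ketbra inner_e_pm v_p !mulr0.
- by rewrite opapply_adj_scale opapply_adj_ketbra inner_phi1 !mulr0.
- exact: opapply_eq0.
- by apply: opapply_eq0 => y; apply: conjC0.
- by rewrite opapply_scale opapply_ketbra inner_phiN !mulr0.
- by rewrite opapply_adj_scale opapply_adj_ketbra inner_e_pm v_m !mulr0.
- by rewrite opapply_scale Zadj_E1_kerZ1 ?mulr0.
- by rewrite opapply_adj_scale opapply_adjK Zop_E1_kerZ1 ?mulr0.
- by rewrite opapply_scale Zop_E1_kerZ1 ?mulr0.
- by rewrite opapply_adj_scale Zadj_E1_kerZ1 ?mulr0.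
Qed.

Lemma E1_kerZ1_of_in_W v : in_W Gp Gm Gk v -> in_E1_kerZ1 v.
Proof.
move=> hW.
have h1N : (1 <= 1 <= N)%N := ltnW N_ge2.
have hNN : (1 <= N <= N)%N by rewrite leqnn andbT ltnW.
have hk1 : (1 <= 1 < N)%N := N_ge2.
have cancel g k X : sqrtC g * (isqrt (n k) * X) = 0 -> 0 < g -> (1 <= k <= N)%N -> X = 0.
  move=> E g_gt0 hk; apply: (eq0_of_mulf_eq0 (isqrt_neq0 (n_gt0 hk))).
  by apply: eq0_of_mulf_eq0 E; rewrite sqrtC_eq0 gt_eqF.
have conj_sqrtC g : 0 < g -> (sqrtC g)^* = sqrtC g.
  by move=> g_gt0; rewrite geC0_conj // sqrtC_ge0 ltW.
split.
- have := (hW false om_plus isT).1 (pt 1 0).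
  rewrite /= opapply_scale opapply_ketbra inner_e_pm phi0_pt ?n_gt0 // => /cancel.
  by apply; rewrite ?mulr_gt0 ?ltr0n ?n_gt0.
- have := (hW false om_minus isT).2 (pt N 0).
  rewrite /= opapply_adj_scale opapply_adj_ketbra inner_e_pm phi0_pt ?n_gt0 //.
  by rewrite conj_sqrtC // => /cancel; apply.
- move=> k a hk ha.
  have /andP[k_gt0 kN] := hk; have hkN : (1 <= k <= N)%N by rewrite k_gt0 ltnW.
  have idft0 c : (c < n k)%N -> idft k v c = 0.
    move=> hc; have Gk_gt0' := Gk_gt0 false hk.
    have := (hW false (om_k k) hk).2 (pt k c).
    by rewrite /= opapply_adj_scale Zadj_apply_pt // conj_sqrtC // => /cancel; apply.
  have := zeta_inversion (fun b => v (pt k.+1 b)) (n_mono hk) ha.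
  rewrite big1_seq => [/esym|c /andP[_]]; last first.
    by rewrite mem_iota => /andP[_ /idft0]; rewrite /idft => ->; rewrite mulr0.
  by apply: eq0_of_mulf_eq0; rewrite pnatr_eq0 -lt0n n_gt0.
- move=> b hb; have Gk_gt0' := Gk_gt0 false hk1.
  have := (hW false (om_k 1) hk1).1 (pt 2 b).
  by rewrite /= opapply_scale Zop_apply_pt // => /cancel; apply.
Qed.

Lemma E1_kerZ1_of_range v :
  in_range (opsub (Pk 1) (opcomp (opadj (Zop 1)) (Zop 1))) v -> in_E1_kerZ1 v.
Proof.
move=> [u hu].
have h1N : (1 <= 1 <= N)%N := ltnW N_ge2.
have hk1 : (1 <= 1 < N)%N := N_ge2.
pose r a := u (pt 1 a) - isqrt (n 1) * idft 1 (opapply (Zop 1) u) a.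
have vE x : v x = \sum_(a <- iota 0 (n 1)) e_a 1 a x * r a.
  rewrite hu opapply_sub opapply_comp Pk_apply // Zadj_apply // mulr_sumr -sumrB.
  by apply: eq_bigr => a _; rewrite mulrBr mulrCA.
have v_pt k a : (1 <= k <= N)%N -> (a < n k)%N ->
    v (pt k a) = ((k == 1%N) && (a < n 1)%N)%:R * r a.
  by move=> hk ha; rewrite vE sum_e_a_pt.
split.
- by rewrite vE big1 // => a _; rewrite mul0r.
- by rewrite vE big1 // => a _; rewrite mul0r.
- by move=> [//|k] a /andP[_ kN] ha; rewrite v_pt ?kN // mul0r.
move=> b hb.
have rE a : r a = u (pt 1 a) - isqrt (n 1) ^+ 2 *
    \sum_(c <- iota 0 (n 2)) (zeta (n 1) ^+ (c * a))^* * dft 1 u c.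
  rewrite /r /idft /= expr2 -mulrA; congr (_ - _ * _); rewrite mulr_sumr.
  by apply: eq_big_iota => c hc; rewrite Zop_apply_pt // mulrCA.
rewrite /dft (eq_big_iota (G := fun a => zeta (n 1) ^+ (b * a) * u (pt 1 a) -
    isqrt (n 1) ^+ 2 * (zeta (n 1) ^+ (b * a) *
    \sum_(c <- iota 0 (n 2)) (zeta (n 1) ^+ (c * a))^* * dft 1 u c))); last first.
  by move=> a ha; rewrite v_pt // eqxx ha mul1r rE mulrBr mulrCA.
rewrite sumrB -mulr_sumr zeta_inversion ?n_mono //.
by rewrite mulrA isqrt_sqrK ?n_gt0 // mul1r subrr.
Qed.

Lemma range_of_E1_kerZ1 v :
  in_E1_kerZ1 v -> in_range (opsub (Pk 1) (opcomp (opadj (Zop 1)) (Zop 1))) v.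
Proof.
move=> hv; have [v_p v_m vE _] := hv; exists v => x.
have h1N : (1 <= 1 <= N)%N := ltnW N_ge2.
rewrite opapply_sub opapply_comp [X in _ - X]opapply_vec0 ?subr0 => [|y]; last first.
  by rewrite Zop_E1_kerZ1.
rewrite Pk_apply //; have [[s ->]|[k [a [hk ha ->]]]] := basis_cases x.
  by rewrite big1 => [|a _]; [case: s | rewrite mul0r].
rewrite sum_e_a_pt //; case: eqP => [ek|k_neq1]; first by subst k; rewrite ha mul1r.
case: k k_neq1 hk ha => [//|[//|k] _ hk ha]; by rewrite mul0r vE.
Qed.

End InteractionFree.

Theorem proposition3p5 (N : nat) (n : nat -> nat)
  (Gp Gm : bool -> algC) (Gk : bool -> nat -> algC)
  (hN : (2 <= N)%N)
  (hmono : forall k, (1 <= k < N)%N -> (n k.+1 <= n k)%N)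
  (hpos : (1 <= n N)%N)
  (hGp : forall e, 0 < Gp e) (hGm : forall e, 0 < Gm e)
  (hGk : forall e k, (1 <= k < N)%N -> 0 < Gk e k) :
  forall v : vec N n,
    @in_W N n Gp Gm Gk v <->
    @in_range N n (@opsub N n (@Pk N n 1)
      (@opcomp N n (@opadj N n (@Zop N n 1)) (@Zop N n 1))) v.
Proof.
move=> v; split.
  by move/(E1_kerZ1_of_in_W hN hmono hpos hGp hGm hGk)/(range_of_E1_kerZ1 hN).
by move/(E1_kerZ1_of_range hN hmono hpos)/(in_W_of_E1_kerZ1 Gp Gm Gk hN hmono hpos).
Qed.
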